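(* Let $\lambda_1>\lambda_0>0$, $a,b>0$ with $\lambda_1-\lambda_0>\frac1a+\frac1b$, and let $0<\alpha^*<b/a<\beta^*$ be the optimal stopping boundaries described in the context. Let $f_0$ be the (unique continuous) solution of $$(\lambda_0-\lambda_1)\varphi f_0'(\varphi)+\lambda_0[f_0(\lambda_1\varphi/\lambda_0)-f_0(\varphi)]=0\ \text{ for }\varphi\in(\alpha^*/\beta^*,1),\qquad f_0(1)=1,\quad f_0(\varphi)=0\ \text{for }\varphi>1,$$ and let $f_1$ be the (unique continuous) solution of $$(\lambda_0-\lambda_1)\varphi f_1'(\varphi)+\lambda_0[f_1(\lambda_1\varphi/\lambda_0)-f_1(\varphi)]+(\varphi-1)=0\ \text{ for }\varphi\in(\alpha^*/\beta^*,1),\qquad f_1(1)=0,\quad f_1(\varphi)=-b\ \text{for }\varphi>1.$$ Then $f_0$ and $f_1$ are strictly decreasing on $[\alpha^*/\beta^*,1]$.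
   Context: Setting: $X$ is a Poisson process with $X_0=0$ which under $\mathsf P_0$ ($\mathsf E_0$ its expectation) has intensity $\lambda_0$; $L_t=\exp\{X_t\log(\lambda_1/\lambda_0)-(\lambda_1-\lambda_0)t\}$; $\mathbb S$ is the set of stopping times of the natural filtration of $X$. For $\psi>0$ and $\tau\in\mathbb S$, $\bar J(\psi;\tau)=\frac{1}{1+\psi}\mathsf E_0\big[\int_0^\tau(1+\psi L_t)\,dt+(a\psi L_\tau)\wedge b\big]$. When $\lambda_1-\lambda_0>1/a+1/b$ there exist unique constants $0<\alpha^*<b/a<\beta^*$ (independent of $\psi$) such that for every $\psi>0$ the stopping time $\inf\{t\ge0:\psi L_t\notin(\alpha^*,\beta^* )\}$ minimizes $\bar J(\psi;\cdot)$ over $\mathbb S$. *)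

From HB Require Import structures.
From mathcomp Require Import all_boot all_order all_algebra.
From mathcomp Require Import all_classical all_reals all_analysis.
Set Implicit Arguments. Unset Strict Implicit. Unset Printing Implicit Defensive.
Import Order.TTheory GRing.Theory Num.Theory.
Import numFieldNormedType.Exports.
Local Open Scope classical_set_scope.
Local Open Scope ring_scope.

Section Defs.
Context {R : realType} {d : measure_display} {Omega : measurableType d}.

Definition poisson_pmf (mu : R) (k : nat) : R :=
  expR (- mu) * mu ^+ k / (k`!)%:R.

Definition is_poisson_process (P : probability Omega R) (lam : R)
    (X : R -> Omega -> R) : Prop :=
  (forall w, X 0 w = 0) /\
  (forall t, measurable_fun setT (X t)) /\
  [/\ 
forall w t, 0 <= t -> exists k : nat, X t w = k%:R,
      forall w s t, 0 <= s -> s <= t -> X s w <= X t w,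
      forall w t, 0 <= t -> (fun s => X s w) @ t^'+ --> X t w &
      forall (n : nat) (t : nat -> R) (k : nat -> nat),
        0 <= t 0%N -> (forall i, (i < n)%N -> t i <= t i.+1) ->
        P (\bigcap_(i in [set i | (i < n)%N])
             [set w | X (t i.+1) w - X (t i) w = (k i)%:R])
        = (\prod_(i < n) poisson_pmf (lam * (t i.+1 - t i)) (k i))%:E].

Definition nat_filtration (X : R -> Omega -> R) (t : R) : set (set Omega) :=
  <<s [set A | exists s (B : set R),
          [/\ 0 <= s, s <= t, measurable B & A = X s @^-1` B]] >>.

Definition is_stopping_time (X : R -> Omega -> R) (tau : Omega -> \bar R) : Prop :=
  (forall w, (0 <= tau w)%E) /\
  (forall t, 0 <= t -> nat_filtration X t [set w | (tau w <= t%:E)%E]).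

Definition lik (l0 l1 : R) (X : R -> Omega -> R) (t : R) (w : Omega) : R :=
  expR (X t w * ln (l1 / l0) - (l1 - l0) * t).

(* terminal cost (a psi L_tau) /\ b; on {tau = +oo} (a null set whenever the
   cost is finite) it is set to b *)
Definition terminal_cost (l0 l1 a b psi : R) (X : R -> Omega -> R)
    (tau : Omega -> \bar R) (w : Omega) : \bar R :=
  match tau w with
  | EFin r => (Num.min (a * psi * lik l0 l1 X r w) b)%:E
  | _ => b%:E
  end.

Definition Jbar (P : probability Omega R) (l0 l1 a b : R) (X : R -> Omega -> R)
    (psi : R) (tau : Omega -> \bar R) : \bar R :=
  ((1 + psi)^-1)%:E *
  (\int[P]_w
     ((\int[lebesgue_measure]_(t in [set t : R | (0 <= t)%R /\ (t%:E < tau w)%E])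
         (1 + psi * lik l0 l1 X t w)%R%:E)
      + terminal_cost l0 l1 a b psi X tau w))%E.

Definition exit_time (l0 l1 psi alpha beta : R) (X : R -> Omega -> R)
    (w : Omega) : \bar R :=
  ereal_inf [set t%:E | t in [set t : R | 0 <= t /\
                 ~ (alpha < psi * lik l0 l1 X t w < beta)]].

Definition optimal_boundaries (P : probability Omega R) (l0 l1 a b : R)
    (X : R -> Omega -> R) (alpha beta : R) : Prop :=
  forall psi, 0 < psi ->
    is_stopping_time X (exit_time l0 l1 psi alpha beta X) /\
    forall tau, is_stopping_time X tau ->
      (Jbar P l0 l1 a b X psi (exit_time l0 l1 psi alpha beta X)
       <= Jbar P l0 l1 a b X psi tau)%E.

End Defs.

From HB Require Import structures.
From mathcomp Require Import all_boot all_order all_algebra.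
From mathcomp Require Import all_classical all_reals all_analysis.
From mathcomp Require Import lra.
Import Order.TTheory GRing.Theory Num.Theory.
Import numFieldNormedType.Exports.
Local Open Scope classical_set_scope.
Local Open Scope ring_scope.

(* With r = l1 / l0 > 1, each delay equation forces f' < 0 at every point
   phi of (alpha/beta, 1) where f (r phi) < f phi.  Since f drops at 1
   (f 1 > f phi for phi > 1), this gap is positive near 1, and a continuity
   argument at the supremum of the points where it fails shows that it never
   fails; hence f' < 0 on the whole interval. *)

Lemma within_itv_continuous_dist {R : realType} {c d x e : R} {f : R -> R} :
  {within `[c, d], continuous f} -> c <= x -> x <= d -> 0 < e ->
  exists2 del, 0 < del &
    forall y, c <= y -> y <= d -> `|y - x| < del -> `|f y - f x| < e.
Proof.
move=> /subspace_continuousP f_cont cx xd e_gt0.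
have x_in : [set` `[c, d]] x by rewrite /= in_itv /= cx xd.
have /cvgrPdist_lt/(_ e e_gt0) := f_cont x x_in.
rewrite /within /= => /nbhs_ballP [del del_gt0 near_x].
exists del => // y cy yd yx.
rewrite distrC; apply: (near_x y); last by rewrite in_itv /= cy yd.
by rewrite /ball /= distrC.
Qed.

Section ScaledGap.
Context {R : realType} {c r v w : R} {f : R -> R}.
Hypotheses (c_gt0 : 0 < c) (r_gt1 : 1 < r) (w_lt_v : w < v).
Hypothesis f_cont : {within `[c, 1], continuous f}.
Hypotheses (f1 : f 1 = v) (f_gt1 : forall p, 1 < p -> f p = w).
Hypothesis f_derivable : forall p, c < p -> p < 1 -> derivable f p 1.
Hypothesis f_derive_lt0 :
  forall p, c < p -> p < 1 -> f (r * p) < f p -> derive1 f p < 0.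

(* [lra] and [nra] ignore section hypotheses. *)
Local Ltac arith := have := c_gt0; have := r_gt1; have := w_lt_v; move=> *; nra.

Lemma decreasing_from {s : R} : c <= s -> s < 1 ->
  (forall p, s < p -> p < 1 -> f (r * p) < f p) ->
  forall x y, s <= x -> x < y -> y <= 1 -> f y < f x.
Proof.
move=> cs s1 gap x y sx xy y1.
have inner p : p \in `]s, 1[ -> [/\ s < p, c < p & p < 1].
  by rewrite in_itv /= => /andP[sp p1]; split => //; lra.
apply: (@ltr0_derive1_lt_cc _ f s 1) => //.
- by move=> p /inner[_ cp p1]; exact: f_derivable.
- by move=> p /inner[sp cp p1]; apply: f_derive_lt0 => //; exact: gap.
- by apply: continuous_subspaceW f_cont; apply: subset_itvr; rewrite bnd_simp.
- by rewrite in_itv /= y1 andbT; lra.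
- by rewrite in_itv /= sx /=; lra.
Qed.

Lemma scaled_gap_at {s : R} : c <= s -> s <= 1 ->
  (forall p, s < p -> p < 1 -> f (r * p) < f p) -> f (r * s) < f s.
Proof.
move=> cs s1 gap.
have [-> | s_neq1] := eqVneq s 1; first by rewrite mulr1 f1 f_gt1.
have s_lt1 : s < 1 by rewrite lt_neqAle s_neq1.
have f_decr := decreasing_from cs s_lt1 gap.
have [rs1 | rs_gt1] := leP (r * s) 1; first by apply: f_decr => //; arith.
by rewrite f_gt1 // (lt_trans w_lt_v) // -f1 f_decr.
Qed.

Lemma scaled_continuous_left {s e : R} : c <= s -> s <= 1 -> 0 < e ->
  exists2 del, 0 < del &
    forall q, c <= q -> q <= s -> s - del < q -> `|f (r * q) - f (r * s)| < e.
Proof.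
move=> cs s1 e_gt0.
have r_gt0 : 0 < r by arith.
have [rs1 | rs_gt1] := leP (r * s) 1.
  have crs : c <= r * s by arith.
  have [del del_gt0 near_rs] := within_itv_continuous_dist f_cont crs rs1 e_gt0.
  exists (del / r) => [|q cq qs sq]; first exact: divr_gt0.
  have r_dist : r * (s - q) < del by rewrite -ltr_pdivlMl // mulrC; lra.
  by apply: near_rs; rewrite ?ler0_norm; arith.
have inv_r_lt_s : r^-1 < s by rewrite -[r^-1]mulr1 ltr_pdivrMl //; arith.
exists (s - r^-1) => [|q cq qs sq]; first by rewrite subr_gt0.
have rq_gt1 : 1 < r * q by rewrite -ltr_pdivrMl // mulr1; lra.
by rewrite !f_gt1 ?subrr ?normr0.
Qed.

Lemma scaled_gap_near_left {s : R} : c <= s -> s <= 1 -> f (r * s) < f s ->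
  exists2 del, 0 < del &
    forall q, c <= q -> q <= s -> s - del < q -> f (r * q) < f q.
Proof.
move=> cs s1 gap_s.
pose e := (f s - f (r * s)) / 2.
have e_gt0 : 0 < e by rewrite divr_gt0 // subr_gt0.
have [del1 del1_gt0 near_s] := within_itv_continuous_dist f_cont cs s1 e_gt0.
have [del2 del2_gt0 near_rs] := scaled_continuous_left cs s1 e_gt0.
exists (Num.min del1 del2) => [|q cq qs]; first by rewrite lt_min del1_gt0.
rewrite ltrBlDr -ltrBlDl lt_min => /andP[sq1 sq2].
have /near_s : `|q - s| < del1 by rewrite ler0_norm; lra.
have /near_rs : s - del2 < q by lra.
rewrite !ltr_norml /e => /(_ cq qs) /andP[? ?].
by move=> /(_ cq (le_trans qs s1)) /andP[? ?]; lra.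
Qed.

Lemma scaled_gap (p : R) : c < p -> p < 1 -> f (r * p) < f p.
Proof.
move=> cp p1; rewrite ltNge; apply/negP => bad_p.
pose B := [set q | [/\ c < q, q < 1 & f q <= f (r * q)]].
have B_sup : has_sup B.
  by split; [exists p | exists 1 => q [_ q1 _]; exact: ltW].
have p_le_s : p <= sup B by apply: sup_upper_bound.
have s_le1 : sup B <= 1.
  by apply: ge_sup => [|q [_ q1 _]]; [exists p | exact: ltW].
have gap_above q : sup B < q -> q < 1 -> f (r * q) < f q.
  move=> sq q1; rewrite ltNge; apply/negP => bad_q.
  have : q <= sup B by apply: sup_upper_bound => //; split => //; lra.
  lra.
have cs : c <= sup B by lra.
have [del del_gt0 near_s] :=
  scaled_gap_near_left cs s_le1 (scaled_gap_at cs s_le1 gap_above).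
have [q Bq sq] := sup_adherent del_gt0 B_sup.
have qs : q <= sup B by exact: sup_upper_bound.
have [cq _ bad_q] := Bq.
by have := near_s q (ltW cq) qs sq; lra.
Qed.

Lemma decreasing_scaled_gap x y : c <= x -> x < y -> y <= 1 -> f y < f x.
Proof.
move=> cx xy y1; apply: (decreasing_from (lexx c)) => //; first lra.
by move=> p cp p1; apply: scaled_gap.
Qed.

End ScaledGap.

Lemma delay_ode_derive_lt0 {R : realDomainType} {l0 l1 p k D fp frp : R} :
  0 < l0 -> l0 < l1 -> 0 < p -> k <= 0 ->
  (l0 - l1) * p * D + l0 * (frp - fp) + k = 0 -> frp < fp -> D < 0.
Proof.
move=> l0_gt0 l0_lt_l1 p_gt0 k_le0 ode gap.
have slope_gt0 : 0 < (l1 - l0) * p by rewrite mulr_gt0 // subr_gt0.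
have drift_lt0 : l0 * (frp - fp) < 0 by rewrite pmulr_rlt0 // subr_lt0.
nra.
Qed.

Theorem lemma3p3 (R : realType) (l0 l1 a b : R)
    (d : measure_display) (Omega : measurableType d)
    (P : probability Omega R) (X : R -> Omega -> R)
    (alpha beta : R) (f0 f1 : R -> R) :
  0 < l0 -> l0 < l1 -> 0 < a -> 0 < b -> a^-1 + b^-1 < l1 - l0 ->
  is_poisson_process P l0 X ->
  0 < alpha -> alpha < b / a -> b / a < beta ->
  optimal_boundaries P l0 l1 a b X alpha beta ->
  {within `[alpha / beta, 1], continuous f0} ->
  (forall phi, alpha / beta < phi < 1 ->
     derivable f0 phi 1 /\
     (l0 - l1) * phi * derive1 f0 phi + l0 * (f0 (l1 * phi / l0) - f0 phi) = 0) ->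
  f0 1 = 1 -> (forall phi, 1 < phi -> f0 phi = 0) ->
  {within `[alpha / beta, 1], continuous f1} ->
  (forall phi, alpha / beta < phi < 1 ->
     derivable f1 phi 1 /\
     (l0 - l1) * phi * derive1 f1 phi + l0 * (f1 (l1 * phi / l0) - f1 phi)
       + (phi - 1) = 0) ->
  f1 1 = 0 -> (forall phi, 1 < phi -> f1 phi = - b) ->
  (forall x y, alpha / beta <= x -> x < y -> y <= 1 -> f0 y < f0 x) /\
  (forall x y, alpha / beta <= x -> x < y -> y <= 1 -> f1 y < f1 x).
Proof.
move=> l0_gt0 l0_lt_l1 a_gt0 b_gt0 _ _ alpha_gt0 _ ba_lt_beta _
  f0_cont ode0 f0_1 f0_gt1 f1_cont ode1 f1_1 f1_gt1.
have beta_gt0 : 0 < beta by apply: lt_trans ba_lt_beta; rewrite divr_gt0.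
have c_gt0 : 0 < alpha / beta by rewrite divr_gt0.
have r_gt1 : 1 < l1 / l0 by rewrite ltr_pdivlMr // mul1r.
have scale (g : R -> R) p : g (l1 / l0 * p) = g (l1 * p / l0).
  by rewrite mulrAC.
have inner p : alpha / beta < p -> p < 1 -> alpha / beta < p < 1.
  by move=> -> ->.
have p_gt0 p : alpha / beta < p -> 0 < p by apply: lt_trans.
split.
- apply: (decreasing_scaled_gap c_gt0 r_gt1 ltr01 f0_cont) => // p cp p1.
    by have [] := ode0 p (inner p cp p1).
  have [_ ode] := ode0 p (inner p cp p1); rewrite -[X in X = 0]addr0 in ode.
  rewrite scale.
  exact: (delay_ode_derive_lt0 l0_gt0 l0_lt_l1 (p_gt0 p cp) (lexx 0) ode).
- have nb_lt0 : - b < 0 by rewrite oppr_lt0.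
  apply: (decreasing_scaled_gap c_gt0 r_gt1 nb_lt0 f1_cont) => // p cp p1.
    by have [] := ode1 p (inner p cp p1).
  have [_ ode] := ode1 p (inner p cp p1); rewrite scale.
  by apply: (delay_ode_derive_lt0 l0_gt0 l0_lt_l1 (p_gt0 p cp) _ ode);
    rewrite subr_le0 ltW.
Qed.
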